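(* For every integer $n\ge 2$, every integer $k\ge 0$ and every real $x$, $$W^{(k+2)}_{n}(x)=W^{(k)}_{n}(x)+(-2)^{n-1}(n+k+1)(n-2)!\,\sin^n(x)\,W^{(k+2)}_{n-1}(x).$$
   Context: For smooth functions $f_1,\dots,f_n$ of a real variable $x$, $\mathrm{Wr}\{f_1,\dots,f_n\}$ denotes the determinant of the $n\times n$ matrix with $(i,j)$ entry $f_j^{(i-1)}(x)$. For integers $k\ge0$ define $W^{(k)}_1(x):=\sin((k+1)x)$ and, for $n\ge 2$, $W^{(k)}_n(x):=\mathrm{Wr}\{\sin(x),\sin(2x),\dots,\sin((n-1)x),\sin((n+k)x)\}$. *)

From HB Require Import structures.
From mathcomp Require Import all_boot all_order all_algebra.
From mathcomp Require Import all_classical all_reals all_analysis.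
Set Implicit Arguments. Unset Strict Implicit. Unset Printing Implicit Defensive.
Import Order.TTheory GRing.Theory Num.Theory.
Local Open Scope ring_scope.

Definition Wr (R : realType) (n : nat) (f : 'I_n -> R -> R) (x : R) : R :=
  \det (\matrix_(i < n, j < n) derive1n i (f j) x).

(* W^{(k)}_n(x):  n = 1 : sin((k+1)x);
   n >= 2 : Wr{sin x, sin 2x, ..., sin((n-1)x), sin((n+k)x)}.
   (n = 0 is never used; it is given the value of the generic branch.) *)
Definition W (R : realType) (k n : nat) (x : R) : R :=
  if n == 1%N then sin ((k.+1)%:R * x)
  else Wr (fun (j : 'I_n) (t : R) =>
             if (j < n.-1)%N then sin ((j.+1)%:R * t) else sin ((n + k)%:R * t)) x.

From HB Require Import structures.
From mathcomp Require Import all_boot all_order all_algebra.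
From mathcomp Require Import all_classical all_reals all_analysis.
From mathcomp Require Import ring zify.
Import Order.TTheory GRing.Theory Num.Theory.
Local Open Scope ring_scope.

(* With N = n + k, the two Wronskians on the left differ only in their last
   column, and sin((N+2)t) - sin(Nt) = sin t * 2cos((N+1)t).  Writing
   sin((j+1)t) = sin t * U_j(cos t) with the Chebyshev polynomials U_j and
   pulling sin t out of every column (Leibniz rule: the Wronskian of g*f_j is
   g^n times that of the f_j) leaves the Wronskian of U_0(cos t) = 1, ...,
   U_{n-2}(cos t), 2cos((N+1)t).  Its constant first column reduces it to the
   Wronskian of the derivatives, which all carry the factor -sin t.  Both this
   and W^{(k+2)}_{n-1} are then, by a triangular change of basis, multiples of
   the Wronskian of 1, cos t, ..., cos^{n-3} t, U_N(cos t); comparing the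
   leading coefficients 2^j of U_j gives the constant (-2)^{n-1}(N+1)(n-2)!. *)

Set Implicit Arguments. Unset Strict Implicit. Unset Printing Implicit Defensive.

Section TrigPoly.
Variable R : realType.
Implicit Types (f g : R -> R) (P Q : {poly R}).

Lemma derive1D f g t : derivable f t 1 -> derivable g t 1 ->
  derive1 (fun x => f x + g x) t = derive1 f t + derive1 g t.
Proof. by move=> df dg; rewrite !derive1E (deriveD df dg). Qed.

Lemma derive1M f g t : derivable f t 1 -> derivable g t 1 ->
  derive1 (fun x => f x * g x) t = derive1 f t * g t + f t * derive1 g t.
Proof.
move=> df dg; rewrite !derive1E (deriveM df dg) /= addrC.
by rewrite [_ *: 'D_1 f t]mulrC.
Qed.

Lemma derivable_horner_cos P t : derivable (fun x => P.[cos x]) t 1.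
Proof.
apply/derivable1_diffP/(@differentiable_comp _ _ _ _ cos (horner P)).
  exact/derivable1_diffP/derivable_cos.
exact/derivable1_diffP/derivable_horner.
Qed.

Lemma derive1_horner_cos P t :
  derive1 (fun x => P.[cos x]) t = - sin t * (P^`()).[cos t].
Proof.
have := derive1_comp (@derivable_cos R t) (@derivable_horner R P (cos t)).
by rewrite /comp => ->; rewrite -derivE derive1E derive_val mulrC.
Qed.

(* Closed under sums, products and derivation, so every derivative met below
   exists. *)
Definition trigpoly f :=
  exists P Q, f = fun t => P.[cos t] + sin t * Q.[cos t].

Lemma trigpoly_derivable f t : trigpoly f -> derivable f t 1.
Proof.
case=> P [Q ->]; apply: derivableD; first exact: derivable_horner_cos.
by apply: derivableM; [exact: derivable_sin | exact: derivable_horner_cos].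
Qed.

Lemma trigpoly_derive1 f : trigpoly f -> trigpoly (derive1 f).
Proof.
case=> P [Q ->]; exists ('X * Q - (1 - 'X^2) * Q^`()), (- P^`()).
apply/funext => t; have dhc := derivable_horner_cos.
rewrite derive1D ?derive1M // !derive1_horner_cos derive1E derive_val.
rewrite !(hornerD, hornerN, hornerM, hornerX, hornerXn, hornerC) -sin2cos2; ring.
Qed.

Lemma trigpolyD f g : trigpoly f -> trigpoly g -> trigpoly (fun t => f t + g t).
Proof.
case=> P1 [Q1 ->] [P2 [Q2 ->]]; exists (P1 + P2), (Q1 + Q2).
by apply/funext => t; rewrite !hornerD; ring.
Qed.

Lemma trigpolyM f g : trigpoly f -> trigpoly g -> trigpoly (fun t => f t * g t).
Proof.
case=> P1 [Q1 ->] [P2 [Q2 ->]].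
exists (P1 * P2 + (1 - 'X^2) * Q1 * Q2), (P1 * Q2 + Q1 * P2).
apply/funext => t.
by rewrite !(hornerD, hornerN, hornerM, hornerX, hornerC) -expr2 -sin2cos2; ring.
Qed.

Lemma trigpoly_horner_cos P : trigpoly (fun t => P.[cos t]).
Proof. by exists P, 0; apply/funext => t; rewrite horner0 mulr0 addr0. Qed.

Lemma trigpoly_cst c : trigpoly (fun _ => c).
Proof. by exists c%:P, 0; apply/funext => t; rewrite hornerC horner0 mulr0 addr0. Qed.

Lemma trigpolyZ c f : trigpoly f -> trigpoly (fun t => c * f t).
Proof. exact/trigpolyM/trigpoly_cst. Qed.

Lemma trigpolyN f : trigpoly f -> trigpoly (fun t => - f t).
Proof. by move/(trigpolyZ (-1)); under eq_fun do rewrite mulN1r. Qed.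

Lemma trigpoly_sin : trigpoly (@sin R).
Proof. by exists 0, 1; apply/funext => t; rewrite horner0 hornerC mulr1 add0r. Qed.

Lemma trigpoly_cos : trigpoly (@cos R).
Proof. by exists 'X, 0; apply/funext => t; rewrite hornerX horner0 mulr0 addr0. Qed.

Lemma trigpolyX f n : trigpoly f -> trigpoly (fun t => f t ^+ n).
Proof.
move=> tf; elim: n => [|n IH]; first exact: trigpoly_cst.
by under eq_fun do rewrite exprS; exact: trigpolyM.
Qed.

Lemma trigpoly_derive1n i f : trigpoly f -> trigpoly (derive1n i f).
Proof. by move=> tf; elim: i => // i IH; rewrite derive1nS; exact: trigpoly_derive1. Qed.

Lemma trigpoly_sum m (F : 'I_m -> R -> R) :
  (forall l, trigpoly (F l)) -> trigpoly (fun t => \sum_(l < m) F l t).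
Proof.
elim: m F => [|m IH] F tF.
  by under eq_fun do rewrite big_ord0; exact: trigpoly_cst.
under eq_fun do rewrite big_ord_recr; apply: trigpolyD => //.
exact: IH.
Qed.

Lemma trigpoly_sinM_cosM m :
  trigpoly (fun t => sin (m%:R * t)) /\ trigpoly (fun t => cos (m%:R * t)).
Proof.
elim: m => [|m [ts tc]].
  by split; under eq_fun do rewrite mul0r ?sin0 ?cos0; exact: trigpoly_cst.
have mulS t : m.+1%:R * t = m%:R * t + t by rewrite mulrSr mulrDl mul1r.
have [tsin tcos] := (trigpoly_sin, trigpoly_cos).
split; under eq_fun do rewrite mulS ?sinD ?cosD.
  by apply: trigpolyD; apply: trigpolyM.
by apply: trigpolyD; last apply: trigpolyN; apply: trigpolyM.
Qed.
End TrigPoly.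

Section HigherDerivatives.
Variable R : realType.
Implicit Types (f g : R -> R).

Lemma derive1nD i f g : trigpoly f -> trigpoly g ->
  derive1n i (fun t => f t + g t) = fun t => derive1n i f t + derive1n i g t.
Proof.
move=> tf tg; elim: i => // i IH; apply/funext => t.
by rewrite derive1nS IH derive1D //; apply/trigpoly_derivable/trigpoly_derive1n.
Qed.

Lemma derive1nZ i c f : trigpoly f ->
  derive1n i (fun t => c * f t) = fun t => c * derive1n i f t.
Proof.
move=> tf; elim: i => // i IH; apply/funext => t.
by rewrite derive1nS IH derive1Ml //; apply/trigpoly_derivable/trigpoly_derive1n.
Qed.

Lemma derive1nB i f g : trigpoly f -> trigpoly g ->
  derive1n i (fun t => f t - g t) = fun t => derive1n i f t - derive1n i g t.
Proof.
move=> tf tg; have := derive1nD i tf (trigpolyZ (-1) tg).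
rewrite derive1nZ //; under eq_fun do rewrite mulN1r.
by under [in X in _ = X -> _]eq_fun do rewrite mulN1r.
Qed.

Lemma derive1n_cst i (c : R) : derive1n i.+1 (fun _ : R => c) = fun _ => 0.
Proof.
elim: i => [|i IH]; apply/funext => t; first exact: derive1_cst.
by rewrite derive1nS IH derive1_cst.
Qed.

Lemma derive1n_sum i m (F : 'I_m -> R -> R) : (forall l, trigpoly (F l)) ->
  derive1n i (fun t => \sum_(l < m) F l t) = fun t => \sum_(l < m) derive1n i (F l) t.
Proof.
elim: m F => [|m IH] F tF.
  under eq_fun do rewrite big_ord0; under [RHS]eq_fun do rewrite big_ord0.
  by case: i => // i; rewrite derive1n_cst.
under eq_fun do rewrite big_ord_recr; under [RHS]eq_fun do rewrite big_ord_recr.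
rewrite derive1nD ?IH //; exact: trigpoly_sum.
Qed.

(* Leibniz rule, with the sum padded to any length K > i (the extra binomials
   vanish) so that it reads as a matrix product. *)
Lemma derive1nM K i f g : trigpoly f -> trigpoly g -> (i < K)%N ->
  derive1n i (fun t => f t * g t) =
  fun t => \sum_(l < K) 'C(i, l)%:R * (derive1n (i - l) f t * derive1n l g t).
Proof.
move=> tf tg; elim: i => [|i IH] iK; apply/funext => t.
  case: K iK => // K _; rewrite big_ord_recl bin0 mul1r subn0 big1 ?addr0 // => l _.
  by rewrite bin0n mul0r.
have tfg j l : trigpoly (fun t => derive1n j f t * derive1n l g t).
  by apply: trigpolyM; exact: trigpoly_derive1n.
case: K IH iK => // K IH iK.
pose a l := 'C(i, l)%:R * (derive1n (i - l).+1 f t * derive1n l g t).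
pose b l := 'C(i, l)%:R * (derive1n (i - l) f t * derive1n l.+1 g t).
have da l : derive1n 1 (fun t => 'C(i, l)%:R * (derive1n (i - l) f t * derive1n l g t)) t
    = a l + b l.
  rewrite derive1nZ // derive1n1 derive1M; try exact/trigpoly_derivable/trigpoly_derive1n.
  by rewrite -mulrDr.
rewrite derive1nS (IH (ltnW iK)) -derive1n1 derive1n_sum; last by move=> l; exact: trigpolyZ.
under eq_bigr do rewrite da.
rewrite big_split [\sum_(l < K.+1) b l]big_ord_recr [\sum_(l < K.+1) a l]big_ord_recl.
rewrite big_ord_recl /= (_ : b K = 0) ?addr0; last by rewrite /b bin_small ?mul0r.
rewrite -addrA -big_split /a !bin0 subn0; congr (_ + _); apply: eq_bigr => l _.
rewrite /bump leq0n add1n /b subSS binS natrD mulrDl; congr (_ + _).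
have [li|il] := leqP l.+1 i; first by rewrite subnSK.
by rewrite bin_small ?mul0r.
Qed.

End HigherDerivatives.

Section Wronskian.
Variable R : realType.

Lemma Wr_mulmx n (F G : 'I_n -> R -> R) (T : 'M[R]_n) x :
  (forall l, trigpoly (G l)) -> (forall j, F j = fun t => \sum_(l < n) T l j * G l t) ->
  Wr F x = \det T * Wr G x.
Proof.
move=> tG FE; rewrite /Wr mulrC -det_mulmx; congr (\det _); apply/matrixP => i j.
rewrite !mxE FE derive1n_sum => [|l]; last exact: trigpolyZ.
by apply: eq_bigr => l _; rewrite derive1nZ // !mxE mulrC.
Qed.

Lemma Wr_mul n g (F : 'I_n -> R -> R) x : trigpoly g -> (forall j, trigpoly (F j)) ->
  Wr (fun j t => g t * F j t) x = g x ^+ n * Wr F x.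
Proof.
move=> tg tF; rewrite /Wr.
pose L := \matrix_(i < n, l < n) ('C(i, l)%:R * derive1n (i - l) g x).
have -> : \matrix_(i < n, j < n) derive1n i (fun t => g t * F j t) x =
          L *m \matrix_(i < n, j < n) derive1n i (F j) x.
  apply/matrixP => i j; rewrite !mxE (derive1nM _ _ (ltn_ord i)) //.
  by apply: eq_bigr => l _; rewrite !mxE mulrA.
rewrite det_mulmx det_trig.
  congr (_ * _); rewrite -[n in RHS]card_ord -prodr_const; apply: eq_bigr => i _.
  by rewrite mxE binn subnn mul1r.
apply/forallP => i; apply/forallP => j; apply/implyP => ij.
by rewrite mxE bin_small // mul0r.
Qed.

Lemma Wr_const1 n (F : 'I_n.+1 -> R -> R) x : F ord0 = (fun _ => 1) ->
  Wr F x = Wr (fun j : 'I_n => derive1 (F (lift ord0 j))) x.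
Proof.
move=> F0; rewrite /Wr (expand_det_col _ ord0) big_ord_recl big1 ?addr0 => [|l _].
  rewrite mxE F0 mul1r /cofactor addn0 expr0 mul1r; congr (\det _).
  by apply/matrixP => i j; rewrite !mxE lift0 derive1Sn.
by rewrite mxE lift0 F0 derive1n_cst mul0r.
Qed.

Lemma det_colB n (A B C : 'M[R]_n) j0 :
  (forall i j, j != j0 -> A i j = C i j /\ B i j = C i j) ->
  (forall i, C i j0 = A i j0 - B i j0) -> \det C = \det A - \det B.
Proof.
move=> ABC Cj0; rewrite !(expand_det_col _ j0) -sumrB; apply: eq_bigr => i _.
have cofE (D : 'M[R]_n) : (forall i j, j != j0 -> D i j = C i j) -> cofactor D i j0 = cofactor C i j0.
  move=> DC; rewrite /cofactor; congr (_ * \det _); apply/matrixP => a b; rewrite !mxE.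
  by apply: DC; rewrite eq_sym neq_lift.
rewrite Cj0 mulrBl (cofE A) ?(cofE B) // => a b /(ABC a b) []//.
Qed.

Lemma Wr_colB n (F F1 F2 : 'I_n -> R -> R) j0 x :
  (forall j, j != j0 -> F1 j = F j /\ F2 j = F j) ->
  trigpoly (F1 j0) -> trigpoly (F2 j0) -> F j0 = (fun t => F1 j0 t - F2 j0 t) ->
  Wr F x = Wr F1 x - Wr F2 x.
Proof.
move=> F12 t1 t2 Fj0; apply: (det_colB (j0 := j0)) => [i j /F12[E1 E2]|i].
  by rewrite !mxE E1 E2.
by rewrite !mxE Fj0 derive1nB.
Qed.

End Wronskian.

Section Chebyshev.
Variable R : realType.

Fixpoint chebU (j : nat) : {poly R} :=
  match j with
  | 0 => 1
  | 1 => 'X *+ 2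
  | (j1.+1 as j2).+1 => 'X *+ 2 * chebU j2 - chebU j1
  end.

Arguments chebU : simpl never.

Lemma chebUSS j : chebU j.+2 = 'X *+ 2 * chebU j.+1 - chebU j.
Proof. by []. Qed.

Lemma sin_chebU j t : sin (j.+1%:R * t) = sin t * (chebU j).[cos t].
Proof.
suff : sin (j.+1%:R * t) = sin t * (chebU j).[cos t] /\
       sin (j.+2%:R * t) = sin t * (chebU j.+1).[cos t] by case.
elim: j => [|j [IH1 IH2]].
  split; first by rewrite mul1r hornerC mulr1.
  rewrite hornerMn hornerX (_ : 2%:R * t = t + t) ?sinD; last by rewrite mulrDl mul1r.
  by rewrite mulr2n; ring.
split=> //; apply: (addIr (sin (j.+1%:R * t))).
have -> : sin (j.+3%:R * t) + sin (j.+1%:R * t) = 2 * cos t * sin (j.+2%:R * t).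
  rewrite [j.+3%:R]mulrSr [j.+1%:R * t](_ : _ = j.+2%:R * t - t).
    by rewrite mulrDl mul1r sinD sinB; ring.
  by rewrite [j.+2%:R]mulrSr mulrDl mul1r addrK.
rewrite IH1 IH2 chebUSS hornerD hornerN hornerM hornerMn hornerX mulr2n; ring.
Qed.

Lemma chebU_coef_size j : (chebU j)`_j = 2 ^+ j /\ (size (chebU j) <= j.+1)%N.
Proof.
suff : ((chebU j)`_j = 2 ^+ j /\ (size (chebU j) <= j.+1)%N) /\
       ((chebU j.+1)`_j.+1 = 2 ^+ j.+1 /\ (size (chebU j.+1) <= j.+2)%N) by case.
have coefUSS i l : (chebU i.+2)`_l = (if l is l'.+1 then (chebU i.+1)`_l' else 0) *+ 2 - (chebU i)`_l.
  by rewrite chebUSS coefB mulrnAl coefMn coefXM; case: l.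
elim: j => [|j [[_ size_j] [coef_j1 size_j1]]].
  split; first by rewrite coefC size_polyC leq_b1.
  split; first by rewrite coefMn coefX expr1.
  by apply/leq_sizeP => -[|[|l]] // _; rewrite coefMn coefX mul0rn.
split=> //; split.
  by rewrite coefUSS coef_j1 (leq_sizeP _ _ size_j) // subr0 [RHS]exprS mulr_natl.
apply/leq_sizeP => -[|l] // hl.
by rewrite coefUSS (leq_sizeP _ _ size_j1 l) // (leq_sizeP _ _ size_j l.+1) ?mul0rn ?subr0 //;
  lia.
Qed.

Lemma sin_sub_sin m (t : R) :
  sin (m.+2%:R * t) - sin (m%:R * t) = sin t * (2 * cos (m.+1%:R * t)).
Proof.
rewrite [m.+2%:R]mulrSr [m%:R * t](_ : _ = m.+1%:R * t - t).
  by rewrite mulrDl mul1r sinD sinB; ring.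
by rewrite [m.+1%:R]mulrSr mulrDl mul1r addrK.
Qed.

Lemma derive1_cosM (c t : R) : derive1 (fun x => cos (c * x)) t = - c * sin (c * t).
Proof.
have dcx : derivable (fun x : R => c * x) t 1 by exact: derivableM.
have := derive1_comp dcx (@derivable_cos R (c * t)).
rewrite /comp => ->; rewrite derive1Ml // derive1_id mulr1 derive1E derive_val.
by rewrite mulNr mulrC mulNr.
Qed.

End Chebyshev.

Definition rcons_fun (T : Type) m (F : nat -> T) (x : T) (j : 'I_m.+1) : T :=
  if (j < m)%N then F j else x.
Arguments rcons_fun {T} m F x j.

Lemma rcons_fun_max T m (F : nat -> T) x : rcons_fun m F x ord_max = x.
Proof. by rewrite /rcons_fun ltnn. Qed.

Lemma rcons_fun_neq T m (F : nat -> T) x j : j != ord_max -> rcons_fun m F x j = F j.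
Proof.
move=> jm; rewrite /rcons_fun ifT // ltn_neqAle -ltnS ltn_ord andbT.
by apply: contra jm => /eqP jm; apply/eqP/val_inj.
Qed.

Section ChebyshevWronskians.
Variable R : realType.

Lemma Wr_cos_basis m (P : nat -> {poly R}) c (f g : R -> R) x : trigpoly f ->
  (forall j, (j < m)%N -> (size (P j) <= j.+1)%N) -> g = (fun t => c * f t) ->
  Wr (rcons_fun m (fun j t => (P j).[cos t]) g) x =
  c * \prod_(j < m) (P j)`_j * Wr (rcons_fun m (fun j t => cos t ^+ j) f) x.
Proof.
move=> tf sizeP ->.
pose T := \matrix_(l < m.+1, j < m.+1)
  if (j < m)%N then (if (l < m)%N then (P j)`_l else 0) else (if (l < m)%N then 0 else c).
rewrite (Wr_mulmx (G := rcons_fun m (fun j t => cos t ^+ j) f) (T := T)) => [|l|j].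
- rewrite -det_tr det_trig; last first.
    apply/forallP => l; apply/forallP => j; apply/implyP => lj; rewrite !mxE.
    case: ifP => lm; last by have := ltn_ord j; lia.
    by case: ifP => // jm; rewrite (leq_sizeP _ _ (sizeP _ lm)).
  congr (_ * _); rewrite big_ord_recr /= !mxE ltnn mulrC; congr (_ * _).
  by apply: eq_bigr => j _; rewrite !mxE /= ltn_ord.
- rewrite /rcons_fun; case: ifP => _ //; exact/trigpolyX/trigpoly_cos.
apply/funext => t; rewrite big_ord_recr /= !mxE ltnn /rcons_fun /= ltnn.
case: ifP => jm.
  rewrite mul0r addr0 (horner_coef_wide _ (leq_trans (sizeP _ jm) jm)).
  by apply: eq_bigr => l _; rewrite !mxE /= jm ltn_ord.
by rewrite big1 ?add0r // => l _; rewrite !mxE /= jm ltn_ord mul0r.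
Qed.

Lemma Wr_ord1 (F : 'I_1 -> R -> R) x : Wr F x = F ord0 x.
Proof.
rewrite /Wr (expand_det_col _ ord0) big_ord1 mxE /cofactor det_mx00.
by rewrite addn0 expr0 !mulr1.
Qed.

Lemma W_rcons k m (x : R) : W k m.+1 x =
  Wr (rcons_fun m (fun j t => sin (j.+1%:R * t)) (fun t => sin ((m.+1 + k)%:R * t))) x.
Proof.
case: m => [|m]; first by rewrite Wr_ord1 /W /= add1n.
by congr Wr; apply/funext => j; apply/funext => t; rewrite /rcons_fun; case: ifP.
Qed.

Lemma W_chebU k m (x : R) : W k m.+1 x = sin x ^+ m.+1 *
  Wr (rcons_fun m (fun j t => (chebU R j).[cos t]) (fun t => (chebU R (m + k)).[cos t])) x.
Proof.
rewrite W_rcons -Wr_mul; first last.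
- by move=> j; rewrite /rcons_fun; case: ifP => _; exact: trigpoly_horner_cos.
- exact: trigpoly_sin.
congr Wr; apply/funext => j; apply/funext => t.
by rewrite /rcons_fun addSn; case: ifP => _; rewrite sin_chebU.
Qed.

Lemma W_sub k m (x : R) : W (k + 2) m.+2 x - W k m.+2 x = sin x ^+ m.+2 *
  Wr (rcons_fun m.+1 (fun j t => (chebU R j).[cos t])
                     (fun t => 2 * cos ((m.+2 + k).+1%:R * t))) x.
Proof.
pose S j (t : R) := sin (j.+1%:R * t).
have tsinM n : trigpoly (fun t : R => sin (n%:R * t)) := (trigpoly_sinM_cosM R n).1.
rewrite !W_rcons -(@Wr_colB _ _
  (rcons_fun m.+1 S (fun t => sin t * (2 * cos ((m.+2 + k).+1%:R * t)))) _ _ ord_max).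
- rewrite -Wr_mul; first last.
  + move=> j; rewrite /rcons_fun; case: ifP => _; first exact: trigpoly_horner_cos.
    exact/trigpolyZ/(trigpoly_sinM_cosM R _).2.
  + exact: trigpoly_sin.
  congr Wr; apply/funext => j; apply/funext => t.
  by rewrite /rcons_fun /S; case: ifP => _; rewrite ?sin_chebU.
- by move=> j jm; rewrite !rcons_fun_neq.
- by rewrite rcons_fun_max.
- by rewrite rcons_fun_max.
by rewrite !rcons_fun_max; apply/funext => t; rewrite -sin_sub_sin addn2 !addnS.
Qed.

Lemma Wr_chebU_cos m N (x : R) :
  Wr (rcons_fun m.+1 (fun j t => (chebU R j).[cos t]) (fun t => 2 * cos (N.+1%:R * t))) x =
  (- sin x) ^+ m.+1 * Wr (rcons_fun m (fun j t => ((chebU R j.+1)^`()).[cos t])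
                                     (fun t => 2 * N.+1%:R * (chebU R N).[cos t])) x.
Proof.
rewrite Wr_const1; last by apply/funext => t; rewrite /rcons_fun /= hornerC.
rewrite -(Wr_mul (g := fun t => - sin t)); first last.
- by move=> j; rewrite /rcons_fun; case: ifP => _; [|apply: trigpolyZ]; exact: trigpoly_horner_cos.
- exact/trigpolyN/trigpoly_sin.
congr Wr; apply/funext => j; apply/funext => t; rewrite /rcons_fun lift0 /= ltnS.
case: ifP => _; first exact: derive1_horner_cos.
rewrite derive1Ml ?derive1_cosM ?sin_chebU; first by ring.
by apply: trigpoly_derivable; exact: (trigpoly_sinM_cosM R _).2.
Qed.

Lemma prod_coef_deriv_chebU p : \prod_(j < p) ((chebU R j.+1)^`())`_j =
  2 ^+ p * p`!%:R * \prod_(j < p) (chebU R j)`_j.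
Proof.
have coefU j : (chebU R j)`_j = 2 ^+ j := (chebU_coef_size R j).1.
rewrite (eq_bigr (fun j : 'I_p => 2 * j.+1%:R * (chebU R j)`_j)) => [|j _]; last first.
  by rewrite coef_deriv !coefU exprS -mulr_natr; ring.
by rewrite !big_split /= prodr_const card_ord fact_prod natr_prod big_add1 big_mkord.
Qed.

End ChebyshevWronskians.

Theorem lemma2 (R : realType) (n k : nat) (x : R) : (2 <= n)%N ->
  W (k + 2) n x =
  W k n x + (- 2 : R) ^+ n.-1 * (n + k + 1)%:R * (n - 2)`!%:R
            * sin x ^+ n * W (k + 2) n.-1 x.
Proof.
case: n => [|[|p]] // _; set N := (p.+2 + k)%N.
have sizeU j : (size (chebU R j) <= j.+1)%N := (chebU_coef_size R j).2.
have sizeU' j : (size (chebU R j.+1)^`() <= j.+1)%N.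
  by apply/leq_sizeP => l hl; rewrite coef_deriv (leq_sizeP _ _ (sizeU _)) ?mul0rn.
rewrite -[W (k + 2) _ x](subrK (W k p.+2 x)) W_sub -/N Wr_chebU_cos.
rewrite (Wr_cos_basis (c := 2 * N.+1%:R) (f := fun t => (chebU R N).[cos t])) //; last first.
  exact: trigpoly_horner_cos.
rewrite [W (k + 2) _ x]W_chebU (_ : (p + (k + 2))%N = N); last by rewrite /N; lia.
rewrite (Wr_cos_basis (c := 1) (f := fun t => (chebU R N).[cos t])) //; first last.
- by apply/funext => t; rewrite mul1r.
- exact: trigpoly_horner_cos.
rewrite prod_coef_deriv_chebU addn1 succnK !subSS subn0.
rewrite [(- sin x) ^+ _]exprNn [(- 2) ^+ _]exprNn [2 ^+ p.+1]exprS; ring.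
Qed.
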